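(* Let $R$ be a ring, $S\in\max\mathrm{Den}_l(R)$ and $T$ a left denominator set of $R$. Then $T\subseteq S$ if and only if $\mathrm{ass}(T)\subseteq\mathrm{ass}(S)$.
   Context: All rings are associative with $1$. A multiplicative subset $S$ of $R$ ($1\in S$, $0\notin S$, closed under multiplication) is a left Ore set if $Sr\cap Rs\neq\emptyset$ for all $r\in R$, $s\in S$; for it, $\mathrm{ass}(S):=\{r\in R: sr=0\text{ for some } s\in S\}$. A left Ore set $S$ is a left denominator set if $rs=0$ ($r\in R$, $s\in S$) implies $tr=0$ for some $t\in S$. $\max\mathrm{Den}_l(R)$ is the set of maximal elements, under inclusion, of the set of left denominator sets of $R$. *)

From mathcomp Require Import all_boot all_algebra.
Set Implicit Arguments. Unset Strict Implicit. Unset Printing Implicit Defensive.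
Import GRing.Theory.
Local Open Scope ring_scope.

(* Subsets of a ring are predicates R -> Prop.  Rings: associative with 1,
   possibly noncommutative (pzRingType, allowing even the zero ring). *)

Definition subset_of (R : Type) (A B : R -> Prop) : Prop := forall x, A x -> B x.

Definition mult_subset (R : pzRingType) (S : R -> Prop) : Prop :=
  [/\ S 1, ~ S 0 & forall a b, S a -> S b -> S (a * b)].

Definition left_Ore (R : pzRingType) (S : R -> Prop) : Prop :=
  mult_subset S /\
  forall (r s : R), S s -> exists s' r', S s' /\ s' * r = r' * s.

Definition ass (R : pzRingType) (S : R -> Prop) : R -> Prop :=
  fun r => exists s, S s /\ s * r = 0.

Definition left_den (R : pzRingType) (S : R -> Prop) : Prop :=
  left_Ore S /\
  forall (r s : R), S s -> r * s = 0 -> exists t, S t /\ t * r = 0.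

Definition maxDen_l (R : pzRingType) (S : R -> Prop) : Prop :=
  left_den S /\
  forall T : R -> Prop, left_den T -> subset_of S T -> subset_of T S.

From mathcomp Require Import all_boot all_algebra.
Import GRing.Theory.
Local Open Scope ring_scope.
Set Implicit Arguments. Unset Strict Implicit.

(* If [ass T] is contained in [ass S], the multiplicative monoid generated by
   [S] and [T] is again a left denominator set: the Ore and reversibility
   conditions pass from the generators to the words, and no word is killed by
   an element of [S] (a word killed on the left by [T] lies in [ass T], hence
   in [ass S]), so that [0] is not a word.  Maximality of [S] then forces
   [T] into [S].  The converse is the monotonicity of [ass]. *)

Inductive monoid_closure (R : pzRingType) (A : R -> Prop) : R -> Prop :=
| monoid_closure1 : monoid_closure A 1
| monoid_closureM w a : monoid_closure A w -> A a -> monoid_closure A (w * a).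

Section MonoidClosure.

Variables (R : pzRingType) (A : R -> Prop).

Lemma monoid_closure_sub : subset_of A (monoid_closure A).
Proof. by move=> a Aa; rewrite -[a]mul1r; apply: monoid_closureM (monoid_closure1 A) Aa. Qed.

Lemma monoid_closure_mul u w :
  monoid_closure A u -> monoid_closure A w -> monoid_closure A (u * w).
Proof.
move=> Au; elim=> [|v a _ IHv Aa]; first by rewrite mulr1.
by rewrite mulrA; apply: monoid_closureM.
Qed.

Lemma monoid_closure_Ore :
  (forall r a, A a -> exists a' r', A a' /\ a' * r = r' * a) ->
  forall r w, monoid_closure A w ->
  exists w' r', monoid_closure A w' /\ w' * r = r' * w.
Proof.
move=> OreA r w Aw; elim: Aw r => [|v a _ IHv Aa] r.
  by exists 1, r; split; [exact: monoid_closure1 | rewrite mul1r mulr1].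
have [a' [r1 [Aa' Ea']]] := OreA r a Aa.
have [w' [r2 [Aw' Ew']]] := IHv r1.
exists (w' * a'), r2; split; first exact: monoid_closureM.
by rewrite -mulrA Ea' mulrA Ew' mulrA.
Qed.

Lemma monoid_closure_reversible :
  (forall r a, A a -> r * a = 0 -> exists a', A a' /\ a' * r = 0) ->
  forall r w, monoid_closure A w -> r * w = 0 ->
  exists w', monoid_closure A w' /\ w' * r = 0.
Proof.
move=> revA r w Aw; elim: Aw r => [|v a _ IHv Aa] r.
  by rewrite mulr1 => ->; exists 1; split; [exact: monoid_closure1 | rewrite mulr0].
rewrite mulrA => /(revA _ _ Aa) [a' [Aa']]; rewrite mulrA => /IHv [w' [Aw' Ew']].
by exists (w' * a'); split; [exact: monoid_closureM | rewrite -mulrA].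
Qed.

End MonoidClosure.

Lemma ass_sub (R : pzRingType) (S T : R -> Prop) :
  subset_of T S -> subset_of (ass T) (ass S).
Proof. by move=> TS r [t [Tt tr0]]; exists t; split; first exact: TS. Qed.

Section JoinDenominatorSets.

Variables (R : pzRingType) (S T : R -> Prop).
Hypotheses (denS : left_den S) (denT : left_den T).
Hypothesis assTS : subset_of (ass T) (ass S).

Let ST := monoid_closure (fun x => S x \/ T x).

Lemma monoid_closureU_notin_ass w : ST w -> ~ ass S w.
Proof.
have [[[_ S0 SM] _] revS] := denS; have [_ revT] := denT.
elim=> [|v a _ IHv [Sa | Ta]] [s [Ss]].
- by rewrite mulr1 => s0; apply: S0; rewrite -s0.
- by rewrite mulrA => /(revS _ _ Sa) [s' [Ss' Es']]; apply: IHv; exists (s' * s);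
    split; [exact: SM | rewrite -mulrA].
- rewrite mulrA => /(revT _ _ Ta) [t' [Tt' Et']].
  have [s' [Ss' Es']] := assTS (ex_intro _ t' (conj Tt' Et')).
  by apply: IHv; exists (s' * s); split; [exact: SM | rewrite -mulrA].
Qed.

Lemma left_den_monoid_closureU : left_den ST.
Proof.
have [[_ OreS] revS] := denS; have [[_ OreT] revT] := denT.
split; first split; first split.
- exact: monoid_closure1.
- by move=> /monoid_closureU_notin_ass; apply; exists 1; split;
    [case: denS => -[[]] | rewrite mulr0].
- exact: monoid_closure_mul.
- apply: monoid_closure_Ore => r a [Sa | Ta].
  + by have [a' [r' [Sa' E]]] := OreS r a Sa; exists a', r'; split; first left.
  + by have [a' [r' [Ta' E]]] := OreT r a Ta; exists a', r'; split; first right.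
- apply: monoid_closure_reversible => r a [Sa | Ta] ra0.
  + by have [a' [Sa' E]] := revS r a Sa ra0; exists a'; split; first left.
  + by have [a' [Ta' E]] := revT r a Ta ra0; exists a'; split; first right.
Qed.

End JoinDenominatorSets.

Theorem corollary2p3 (R : pzRingType) (S T : R -> Prop) :
  maxDen_l S -> left_den T ->
  (subset_of T S <-> subset_of (ass T) (ass S)).
Proof.
move=> [denS maxS] denT; split; first exact: ass_sub.
move=> assTS t Tt.
have STS := maxS _ (left_den_monoid_closureU denS denT assTS)
  (fun s Ss => monoid_closure_sub (or_introl Ss)).
exact/STS/monoid_closure_sub/or_intror.
Qed.
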